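(* Let $\lambda\in\Delta([2])$ be a prior over the binary state space $[2]$, let $\pi:[2]\to\Delta(\Sigma)$ be a signaling scheme with finite signal space $\Sigma$, and let $\mu$ be the distribution of posterior beliefs induced by $\pi$. Then there exist a positive integer $K$ and signaling schemes $\pi^{(1)},\dots,\pi^{(K)}$, each of the form $\pi^{(k)}:[2]\to\Delta(\{0,1\})$ (binary signal space), with induced distributions of posterior beliefs $\mu^{(k)}$, and a distribution $F$ over $[K]$, such that for every posterior belief $x\in\mathrm{supp}(\mu)$, $$\Pr[\mu=x]=\mathbb{E}_{k\sim F}\big[\Pr[\mu^{(k)}=x]\big].$$
   Context: For a signaling scheme $\pi$ with signal space $\Sigma$, when the state $\theta\sim\lambda$ and the signal $\sigma\sim\pi(\theta,\cdot)$ are drawn, the posterior belief is $x(\sigma)\in\Delta([2])$ with $x(\sigma)(i)=\lambda(i)\pi(i,\sigma)/\sum_j\lambda(j)\pi(j,\sigma)$; the induced distribution of posterior beliefs $\mu$ is the distribution of the random variable $x(\sigma)$, and $\Pr[\mu=x]$ denotes the probability that the realized posterior equals $x$. *)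

From HB Require Import structures.
From mathcomp Require Import all_boot all_order all_algebra.
Set Implicit Arguments. Unset Strict Implicit. Unset Printing Implicit Defensive.
Import Order.TTheory GRing.Theory Num.Theory.
Local Open Scope ring_scope.

Section Persuasion.
Variable R : realFieldType.

Definition is_dist (T : finType) (p : T -> R) : Prop :=
  (forall t, 0 <= p t) /\ \sum_(t : T) p t = 1.

Definition is_scheme (S : finType) (pi : 'I_2 -> S -> R) : Prop :=
  forall i, is_dist (pi i).

Definition sig_prob (S : finType) (lam : 'I_2 -> R) (pi : 'I_2 -> S -> R) (s : S) : R :=
  \sum_(j < 2) lam j * pi j s.

Definition posterior (S : finType) (lam : 'I_2 -> R) (pi : 'I_2 -> S -> R) (s : S)
  : {ffun 'I_2 -> R} :=
  [ffun i => lam i * pi i s / sig_prob lam pi s].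

(* Pr[mu = x]: total probability of (realizable) signals whose posterior is x *)
Definition post_prob (S : finType) (lam : 'I_2 -> R) (pi : 'I_2 -> S -> R)
  (x : {ffun 'I_2 -> R}) : R :=
  \sum_(s : S | (sig_prob lam pi s != 0) && (posterior lam pi s == x)) sig_prob lam pi s.

Definition in_supp (S : finType) (lam : 'I_2 -> R) (pi : 'I_2 -> S -> R)
  (x : {ffun 'I_2 -> R}) : Prop :=
  0 < post_prob lam pi x.

End Persuasion.

From HB Require Import structures.
From mathcomp Require Import all_boot all_order all_algebra.
From mathcomp Require Import ring.
Import Order.TTheory GRing.Theory Num.Theory.
Local Open Scope ring_scope.

(* Write e(s) = pi(0,s) - pi(1,s) for the likelihood gap of a signal; it sums to
   0 over the signal space.  A signal with e(s) = 0 carries no information and is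
   reproduced by the uninformative binary scheme.  For e(s) < 0 < e(s'), sending
   s with likelihood proportional to e(s') pi(i,s) and s' with likelihood
   proportional to -e(s) pi(i,s') is a binary scheme, because the normaliser
   e(s') pi(i,s) - e(s) pi(i,s') is the same in both states; its two signals are
   rescalings of s and s', so they induce the same posteriors.  As the positive
   and negative parts of e have the same mass M, any f splits as its restriction
   to {e = 0} plus the sum over such pairs of (e(s') f(s) - e(s) f(s')) / M.
   Applied to the posterior masses and to pi(0,.), this writes mu as a mixture
   of the posterior distributions of these binary schemes. *)

Lemma sum_ord2 (V : nmodType) (f : 'I_2 -> V) : \sum_(i < 2) f i = f ord0 + f ord_max.
Proof. by rewrite big_ord_recr big_ord1; congr (f _ + _); apply: val_inj. Qed.

Lemma ord2_cases (i : 'I_2) : i = ord0 \/ i = ord_max.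
Proof. by case: i => -[|[|//]] ?; [left|right]; apply: val_inj. Qed.

Lemma big_sum_pair (V : nmodType) (I J K : finType) (h : I + J * K -> V) :
  \sum_k h k = \sum_i h (inl i) + \sum_j \sum_k h (inr (j, k)).
Proof. by rewrite big_sumType pair_bigA; congr (_ + _); apply: eq_bigr => -[]. Qed.

Lemma big_mkcond2 {V : nmodType} {I J : finType} (P : pred I) (Q : pred J)
    (h : I -> J -> V) :
  \sum_i \sum_j (if P i && Q j then h i j else 0) = \sum_(i | P i) \sum_(j | Q j) h i j.
Proof.
rewrite [RHS]big_mkcond; apply: eq_bigr => i _.
by case: (P i); [rewrite [RHS]big_mkcond | rewrite big1].
Qed.

Lemma is_dist_enum_val {R : realFieldType} {I : finType} {F : I -> R} :
  is_dist F -> (0 < #|I|)%N /\ is_dist (fun k : 'I_#|I| => F (enum_val k)).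
Proof.
move=> [F_ge0 F_sum1]; split; last by split=> [k|]; rewrite ?F_ge0 // -(big_enum_val F).
rewrite lt0n; apply/eqP => /card0_eq I0.
by move: F_sum1; rewrite big_pred0 // => /esym/eqP; rewrite oner_eq0.
Qed.

Section SignSplitting.
Context {R : realFieldType} {S : finType} (m : S -> R).

Definition positive_mass := \sum_(s | 0 < m s) m s.

Lemma positive_mass_ge0 : 0 <= positive_mass.
Proof. by apply: sumr_ge0 => s /ltW. Qed.

Lemma sum_sign_split (f : S -> R) :
  \sum_s f s = \sum_(s | m s == 0) f s + \sum_(s | m s < 0) f s + \sum_(s | 0 < m s) f s.
Proof.
rewrite [X in _ = X + _ + _]big_mkcond [X in _ = _ + X + _]big_mkcond.
rewrite [X in _ = _ + X]big_mkcond -!big_split; apply: eq_bigr => s _ /=.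
by case: ltgtP; rewrite ?addr0 ?add0r.
Qed.

Hypothesis sum_m : \sum_s m s = 0.

Lemma sum_negative_mass : \sum_(s | m s < 0) - m s = positive_mass.
Proof.
have := sum_sign_split m; rewrite sum_m big1 => [|s /eqP //].
rewrite add0r sumrN => /eqP; rewrite eq_sym addr_eq0 => /eqP ->.
exact: opprK.
Qed.

Lemma positive_mass_eq0 : positive_mass = 0 -> forall s, m s = 0.
Proof.
move=> M0 s; case: (ltgtP (m s) 0) => [neg|pos|//].
- have neg_ge0 t : m t < 0 -> 0 <= - m t by rewrite oppr_ge0 => /ltW.
  by rewrite -[m s]opprK (psumr_eq0P neg_ge0 _ neg) ?oppr0 // sum_negative_mass.
- have pos_ge0 t : 0 < m t -> 0 <= m t by move/ltW.
  exact: (psumr_eq0P pos_ge0 M0 pos).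
Qed.

Lemma sum_pair_split (f : S -> R) :
  \sum_s f s = \sum_(s | m s == 0) f s +
    \sum_(s | m s < 0) \sum_(s' | 0 < m s') (m s' * f s - m s * f s') / positive_mass.
Proof.
have [M0|M0] := eqVneq positive_mass 0.
  have m0 := positive_mass_eq0 M0.
  have sum_neg0 (F : S -> R) : \sum_(s | m s < 0) F s = 0.
    by rewrite big_pred0 // => s; rewrite m0 ltxx.
  have sum_pos0 (F : S -> R) : \sum_(s | 0 < m s) F s = 0.
    by rewrite big_pred0 // => s; rewrite m0 ltxx.
  by rewrite (sum_sign_split f) !sum_neg0 sum_pos0 !addr0.
rewrite (sum_sign_split f) -addrA; congr (_ + _); symmetry.
have termE s s' : (m s' * f s - m s * f s') / positive_mass =
    f s * (m s' / positive_mass) + f s' * (- m s / positive_mass) by ring.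
under eq_bigr => s _ do under eq_bigr => s' _ do rewrite termE.
under eq_bigr do rewrite big_split -!mulr_sumr -mulr_suml -/positive_mass.
rewrite big_split /= exchange_big /=.
under [X in _ + X]eq_bigr do rewrite -mulr_sumr -mulr_suml sum_negative_mass.
by rewrite -!mulr_suml divff // !mulr1.
Qed.

End SignSplitting.

Section PosteriorMass.
Context {R : realFieldType} (lam : 'I_2 -> R).

Definition post_mass {S : finType} (pi : 'I_2 -> S -> R) (s : S) (x : {ffun 'I_2 -> R}) :=
  sig_prob lam pi s * (posterior lam pi s == x)%:R.

Lemma post_probE (S : finType) (pi : 'I_2 -> S -> R) x :
  post_prob lam pi x = \sum_s post_mass pi s x.
Proof.
rewrite /post_prob big_mkcond; apply: eq_bigr => s _; rewrite /post_mass.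
have [->|_] /= := eqVneq (sig_prob lam pi s) 0; first by rewrite mul0r.
by case: eqP; rewrite ?mulr1 ?mulr0.
Qed.

Lemma post_mass_scale {S S' : finType} {p : 'I_2 -> S -> R} {p' : 'I_2 -> S' -> R}
    {s : S} {s' : S'} {k : R} (x : {ffun 'I_2 -> R}) :
  (forall i, p' i s' = k * p i s) -> post_mass p' s' x = k * post_mass p s x.
Proof.
move=> p'E.
have sig_probE : sig_prob lam p' s' = k * sig_prob lam p s.
  by rewrite /sig_prob mulr_sumr; apply: eq_bigr => i _; rewrite p'E mulrCA.
have [k0|k0] := eqVneq k 0; first by rewrite /post_mass sig_probE k0 !mul0r.
rewrite /post_mass sig_probE.
have -> : posterior lam p' s' = posterior lam p s.
  apply/ffunP => i; rewrite !ffunE sig_probE p'E invfM.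
  by rewrite -!mulrA [p i s * _]mulrCA mulVKf.
by rewrite mulrA.
Qed.

End PosteriorMass.

Definition no_info {R : realFieldType} : 'I_2 -> 'I_2 -> R := fun _ b => (b == ord0)%:R.

Lemma is_scheme_no_info (R : realFieldType) : is_scheme (@no_info R).
Proof.
move=> i; split=> [b|]; first exact: ler0n.
by rewrite sum_ord2 /no_info eqxx addr0.
Qed.

Lemma post_prob_no_info (R : realFieldType) (lam : 'I_2 -> R) x :
  post_prob lam no_info x = post_mass lam no_info ord0 x.
Proof.
rewrite post_probE sum_ord2 [X in _ + X]/post_mass /sig_prob big1 ?mul0r ?addr0 //.
by move=> i _; rewrite /no_info mulr0.
Qed.

Section Decomposition.
Context {R : realFieldType} (lam : 'I_2 -> R) {S : finType} (pi : 'I_2 -> S -> R).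
Hypothesis pi_scheme : is_scheme pi.

Definition dlik s := pi ord0 s - pi ord_max s.

Lemma sum_dlik : \sum_s dlik s = 0.
Proof. by rewrite sumrB (pi_scheme ord0).2 (pi_scheme ord_max).2 subrr. Qed.

Lemma post_mass_dlik0 s x :
  dlik s = 0 -> post_mass lam pi s x = pi ord0 s * post_prob lam no_info x.
Proof.
move=> /eqP; rewrite subr_eq0 => /eqP pi_s; rewrite post_prob_no_info.
by apply: post_mass_scale => i; rewrite /no_info eqxx mulr1; case: (ord2_cases i) => ->.
Qed.

Definition pair_mass s s' := dlik s' * pi ord0 s - dlik s * pi ord0 s'.

Lemma pair_massE s s' i : pair_mass s s' = dlik s' * pi i s - dlik s * pi i s'.
Proof. by case: (ord2_cases i) => ->; rewrite /pair_mass /dlik //; ring. Qed.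

Definition pair_scheme s s' : 'I_2 -> 'I_2 -> R := fun i b =>
  (if b == ord0 then dlik s' * pi i s else - dlik s * pi i s') / pair_mass s s'.

Section Pair.
Variables s s' : S.
Hypotheses (dlik_s : dlik s < 0) (dlik_s' : 0 < dlik s').

Lemma pair_mass_gt0 : 0 < pair_mass s s'.
Proof.
have pi_s' : 0 < pi ord0 s'.
  by apply: le_lt_trans ((pi_scheme ord_max).1 s') _; rewrite -subr_gt0.
rewrite /pair_mass -mulNr ltr_wpDl ?mulr_gt0 ?oppr_gt0 //.
by rewrite mulr_ge0 ?(pi_scheme ord0).1 // ltW.
Qed.

Lemma is_scheme_pair : is_scheme (pair_scheme s s').
Proof.
move=> i; split=> [b|].
  rewrite divr_ge0 ?(ltW pair_mass_gt0) //.
  by case: eqP => _; rewrite mulr_ge0 ?(pi_scheme i).1 // ltW ?oppr_gt0.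
rewrite sum_ord2 /pair_scheme eqxx /= -mulrDl mulNr -(pair_massE s s' i).
by rewrite divff // gt_eqF // pair_mass_gt0.
Qed.

Lemma post_prob_pair_scheme x :
  post_prob lam (pair_scheme s s') x =
  (dlik s' * post_mass lam pi s x - dlik s * post_mass lam pi s' x) / pair_mass s s'.
Proof.
have scale0 i : pair_scheme s s' i ord0 = dlik s' / pair_mass s s' * pi i s.
  by rewrite /pair_scheme eqxx mulrAC.
have scale1 i : pair_scheme s s' i ord_max = - dlik s / pair_mass s s' * pi i s'.
  by rewrite /pair_scheme /=; ring.
rewrite post_probE sum_ord2 (post_mass_scale lam x scale0) (post_mass_scale lam x scale1).
by ring.
Qed.

End Pair.

Definition piece (k : S + S * S) : 'I_2 -> 'I_2 -> R :=
  if k is inr (s, s') then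
    if dlik s < 0 < dlik s' then pair_scheme s s' else no_info
  else no_info.

Definition piece_weight (k : S + S * S) : R :=
  match k with
  | inl s => if dlik s == 0 then pi ord0 s else 0
  | inr (s, s') => if dlik s < 0 < dlik s' then pair_mass s s' / positive_mass dlik else 0
  end.

Lemma is_scheme_piece k : is_scheme (piece k).
Proof.
case: k => [s|[s s']] /=; first exact: is_scheme_no_info.
by case: ifP => [/andP[]|_]; [exact: is_scheme_pair | exact: is_scheme_no_info].
Qed.

Lemma is_dist_piece_weight : is_dist piece_weight.
Proof.
split.
  case=> [s|[s s']] /=; first by case: eqP => _; rewrite ?(pi_scheme ord0).1.
  case: ifP => [/andP[lt gt]|_] //.
  by rewrite divr_ge0 ?positive_mass_ge0 // ltW // pair_mass_gt0.
rewrite big_sum_pair -(pi_scheme ord0).2 (sum_pair_split dlik sum_dlik).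
rewrite [in RHS]big_mkcond -(big_mkcond2 (fun s => dlik s < 0) (fun s => 0 < dlik s)).
reflexivity.
Qed.

Lemma post_prob_pieces x :
  post_prob lam pi x = \sum_k piece_weight k * post_prob lam (piece k) x.
Proof.
rewrite big_sum_pair post_probE (sum_pair_split dlik sum_dlik) big_mkcond; congr (_ + _).
  apply: eq_bigr => s _ /=.
  by case: eqP => [/post_mass_dlik0 -> // | _]; rewrite mul0r.
rewrite -(big_mkcond2 (fun s => dlik s < 0) (fun s' => 0 < dlik s')).
apply: eq_bigr => s _; apply: eq_bigr => s' _ /=.
case: ifP => [/andP[lt gt]|_]; last by rewrite mul0r.
by rewrite post_prob_pair_scheme [RHS]mulrC [RHS]mulrA divfK // gt_eqF // pair_mass_gt0.
Qed.

End Decomposition.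

Theorem mainTheorem7 (R : realFieldType) (lam : 'I_2 -> R) (S : finType)
  (pi : 'I_2 -> S -> R) :
  is_dist lam -> is_scheme pi ->
  exists (K : nat) (pis : 'I_K -> 'I_2 -> 'I_2 -> R) (F : 'I_K -> R),
    (0 < K)%N /\
    (forall k, is_scheme (pis k)) /\
    is_dist F /\
    (forall x : {ffun 'I_2 -> R}, in_supp lam pi x ->
       post_prob lam pi x = \sum_(k < K) F k * post_prob lam (pis k) x).
Proof.
move=> _ pi_scheme.
have [card_gt0 weight_dist] := is_dist_enum_val (is_dist_piece_weight pi pi_scheme).
exists #|{: S + S * S}|, (fun k => piece pi (enum_val k)),
  (fun k => piece_weight pi (enum_val k)).
split=> //; split=> [k|]; first exact: is_scheme_piece.
split=> // x _; rewrite (post_prob_pieces lam pi pi_scheme).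
exact: (big_enum_val (fun k => piece_weight pi k * post_prob lam (piece pi k) x)).
Qed.
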